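(* The quadric surface $Q$ is tangent to all five coordinate hyperplanes $x_i=0$ ($i=0,\ldots,4$) of $\mathbf{P}^4$. The points of tangency are $(0:3:3:1:1)$, $(3:0:3:1:1)$, $(3:3:0:1:1)$, $(1:1:1:0:1)$, and $(1:1:1:1:0)$.
   Context: $Q\subset\mathbf{P}^4$ is the quadric surface $l=q=0$ with $l:=x_0+x_1+x_2-3x_3-3x_4$ and $q:=x_0^2+x_1^2+x_2^2+9x_3^2-x_0x_1-x_0x_2-3x_0x_3-x_1x_2-3x_1x_3-3x_2x_3$. A surface $S\subset\mathbf{P}^4$ is tangent to a hyperplane $H$ at a point $P\in S$ if the tangent plane $T_PS$ is contained in $H$. *)

From HB Require Import structures.
From mathcomp Require Import all_boot all_order all_algebra.
From mathcomp Require Import mpoly.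
Set Implicit Arguments. Unset Strict Implicit. Unset Printing Implicit Defensive.
Import Order.TTheory GRing.Theory.
Local Open Scope ring_scope.

Section QuadricQ.
Variable F : fieldType.

Definition X (k : nat) : {mpoly F[5]} := 'X_(inord k).

Definition lQ : {mpoly F[5]} := X 0 + X 1 + X 2 - 3%:R * X 3 - 3%:R * X 4.

Definition qQ : {mpoly F[5]} :=
  X 0 ^+ 2 + X 1 ^+ 2 + X 2 ^+ 2 + 9%:R * X 3 ^+ 2
  - X 0 * X 1 - X 0 * X 2 - 3%:R * (X 0 * X 3)
  - X 1 * X 2 - 3%:R * (X 1 * X 3) - 3%:R * (X 2 * X 3).

Definition ev (p : {mpoly F[5]}) (x : 'rV[F]_5) : F := p.@[fun j => x 0 j].

Definition grad (p : {mpoly F[5]}) (x : 'rV[F]_5) : 'rV[F]_5 :=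
  \row_j ev (mderiv j p) x.

(* the projective point [x] (x <> 0) lies on Q = V(l, q) *)
Definition onQ (x : 'rV[F]_5) : Prop := x != 0 /\ ev lQ x = 0 /\ ev qQ x = 0.

(* Q is smooth at [x]: the Jacobian of (l, q) at x has rank 2, so the
   (projective) tangent plane T_x Q is a plane *)
Definition smoothQ (x : 'rV[F]_5) : Prop :=
  \rank (col_mx (grad lQ x) (grad qQ x)) = 2%N.

Definition in_tangent_plane (P y : 'rV[F]_5) : Prop :=
  \sum_j (grad lQ P) 0 j * y 0 j = 0 /\ \sum_j (grad qQ P) 0 j * y 0 j = 0.

(* Q is tangent to the coordinate hyperplane x_i = 0 at P : P is a point
   of Q (smooth, so that T_P Q is a plane) and T_P Q is contained in x_i = 0 *)
Definition tangent_coord_hyp (i : 'I_5) (P : 'rV[F]_5) : Prop :=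
  onQ P /\ smoothQ P /\ forall y : 'rV[F]_5, in_tangent_plane P y -> y 0 i = 0.

Definition vec5 (a0 a1 a2 a3 a4 : F) : 'rV[F]_5 :=
  \row_(j < 5) nth 0 [:: a0; a1; a2; a3; a4] j.

Definition tangency_point (i : 'I_5) : 'rV[F]_5 :=
  match val i with
  | 0%N => vec5 0 3%:R 3%:R 1 1
  | 1%N => vec5 3%:R 0 3%:R 1 1
  | 2%N => vec5 3%:R 3%:R 0 1 1
  | 3%N => vec5 1 1 1 0 1
  | _ => vec5 1 1 1 1 0
  end.

End QuadricQ.

From HB Require Import structures.
From mathcomp Require Import all_boot all_order all_algebra.
From mathcomp Require Import mpoly ring.
Set Implicit Arguments. Unset Strict Implicit. Unset Printing Implicit Defensive.
Import GRing.Theory.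
Local Open Scope ring_scope.

(* Let u be the (constant) gradient of l and g(x) the gradient of q at x,
   which is linear in x.  The tangent plane at P lies in x_i = 0 iff e_i is in
   the span of u and g(P), i.e. (u having nonzero entries off i) iff
   g(P) = c u + d e_i.  At the listed point P_i one finds
   g(P_i) = c_i u - 9 e_i, which gives tangency.  Conversely, if
   g(P) = c u + d e_i and l(P) = 0, then R := P + (d/9) P_i has g(R) in F u and
   l(R) = 0, which forces R = 0 because q is nondegenerate on the hyperplane
   l = 0 as soon as 3 != 0. *)

Lemma exists_ord_neq m (i : 'I_m.+2) : exists j : 'I_m.+2, j != i.
Proof.
exists (if i == ord0 then ord_max else ord0).
by case: (eqVneq i ord0) => [->|]; rewrite // eq_sym.
Qed.

Section TwoRows.
Variables (F : fieldType) (n : nat).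
Implicit Types (u g y : 'rV[F]_n) (i a b : 'I_n).

Lemma dotE u y : \sum_j u 0 j * y 0 j = (u *m y^T) 0 0.
Proof. by rewrite mxE; apply: eq_bigr => j _; rewrite mxE. Qed.

Lemma dot_delta u i : (u *m (delta_mx 0 i : 'rV_n)^T) 0 0 = u 0 i.
Proof. by rewrite trmx_delta -colE mxE. Qed.

Lemma delta_dot i y : ((delta_mx 0 i : 'rV_n) *m y^T) 0 0 = y 0 i.
Proof. by rewrite -rowE !mxE. Qed.

Lemma rank_col_mx_minor u g a b :
  u 0 a * g 0 b - u 0 b * g 0 a != 0 -> \rank (col_mx u g) = 2.
Proof.
move=> minor_neq0; apply/eqP/inj_row_free => v.
rewrite -[v]hsubmxK mul_row_col => /rowP vM0.
set s := lsubmx v 0 0; set t := rsubmx v 0 0.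
have comb j : s * u 0 j + t * g 0 j = 0 by have := vM0 j; rewrite !mxE !big_ord1.
set D := u 0 a * g 0 b - u 0 b * g 0 a in minor_neq0.
have sD : s * D =
    g 0 b * (s * u 0 a + t * g 0 a) - g 0 a * (s * u 0 b + t * g 0 b).
  by rewrite /D; ring.
have tD : t * D =
    u 0 a * (s * u 0 b + t * g 0 b) - u 0 b * (s * u 0 a + t * g 0 a).
  by rewrite /D; ring.
rewrite !comb !mulr0 subrr in sD tD.
move/eqP: sD; move/eqP: tD; rewrite !mulf_eq0 (negbTE minor_neq0) !orbF.
have rV1_eq0 (w : 'rV[F]_1) : w 0 0 == 0 -> w = 0.
  by move/eqP => w0; apply/rowP => k; rewrite ord1 w0 mxE.
by move=> /rV1_eq0 -> /rV1_eq0 ->; rewrite row_mx0.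
Qed.

Lemma rank_col_mx_span u g i b c d :
  g = c *: u + d *: delta_mx 0 i -> d != 0 -> b != i -> u 0 b != 0 ->
  \rank (col_mx u g) = 2.
Proof.
move=> -> d_neq0 bi ub_neq0; apply: (rank_col_mx_minor (a := b) (b := i)).
rewrite !mxE !eqxx (negbTE bi) /=.
have -> : u 0 b * (c * u 0 i + d * 1) - u 0 i * (c * u 0 b + d * 0) = d * u 0 b by ring.
exact: mulf_neq0.
Qed.

Definition kernel_in_coord_hyperplane u g i :=
  forall y, \sum_j u 0 j * y 0 j = 0 /\ \sum_j g 0 j * y 0 j = 0 -> y 0 i = 0.

Lemma span_kernel_in_coord_hyperplane u g i c d :
  g = c *: u + d *: delta_mx 0 i -> d != 0 -> kernel_in_coord_hyperplane u g i.
Proof.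
move=> gE d_neq0 y; rewrite !dotE => -[uy0 gy0].
have : (g *m y^T) 0 0 = c * (u *m y^T) 0 0 + d * y 0 i.
  by rewrite gE mulmxDl -!scalemxAl [LHS]mxE 2![_ (_ *: _) _ _]mxE delta_dot.
by rewrite gy0 uy0 mulr0 add0r => /esym/eqP; rewrite mulf_eq0 (negbTE d_neq0) => /eqP.
Qed.

Lemma kernel_in_coord_hyperplane_minor u g i a b :
  a != i -> b != i -> kernel_in_coord_hyperplane u g i ->
  u 0 a * g 0 b - u 0 b * g 0 a = 0.
Proof.
move=> ai bi ker; apply/eqP/negPn/negP => minor_neq0.
set D := u 0 a * g 0 b - u 0 b * g 0 a in minor_neq0.
(* Cramer's rule: y := e_i + s e_a + t e_b lies in the kernel, yet y_i = 1. *)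
pose s := (u 0 b * g 0 i - u 0 i * g 0 b) / D.
pose t := (u 0 i * g 0 a - u 0 a * g 0 i) / D.
pose y : 'rV_n := delta_mx 0 i + s *: delta_mx 0 a + t *: delta_mx 0 b.
have dot_y (w : 'rV_n) : (w *m y^T) 0 0 = w 0 i + s * w 0 a + t * w 0 b.
  rewrite !linearD !linearZ /=.
  by rewrite 2![_ (_ + _) _ _]mxE 2![_ (_ *: _) _ _]mxE !dot_delta.
have := ker y; rewrite !dotE !dot_y !mxE !eqxx /= ![i == _]eq_sym.
rewrite (negbTE ai) (negbTE bi) !mulr0 !addr0 => ker_y.
have /eqP : (1 : F) = 0 by apply: ker_y; split; rewrite /s /t /D; field.
by rewrite oner_eq0.
Qed.

Lemma kernel_in_coord_hyperplane_span u g i b :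
  b != i -> u 0 b != 0 -> kernel_in_coord_hyperplane u g i ->
  exists c d, g = c *: u + d *: delta_mx 0 i.
Proof.
move=> bi ub_neq0 ker; exists (g 0 b / u 0 b), (g 0 i - g 0 b / u 0 b * u 0 i).
apply/rowP => j; rewrite !mxE eqxx /=; case: (eqVneq j i) => [-> | ji].
  by rewrite mulr1; ring.
have := kernel_in_coord_hyperplane_minor ji bi ker; rewrite mulr0 addr0 => /eqP.
by rewrite subr_eq0 => /eqP minorE; field: minorE.
Qed.

End TwoRows.

Section MPolyDeriv.
Variables (F : fieldType) (n : nat).

Lemma mderiv_X (i j : 'I_n) : mderiv j ('X_i : {mpoly F[n]}) = (i == j)%:R.
Proof.
rewrite mderivX mnm1E; case: eqVneq => [->|_]; last by rewrite scale0r.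
have ->: (U_(j) - U_(j) = 0)%MM by rewrite -{1}(add0m U_(j)%MM) addmK.
by rewrite mpolyX0 scale1r.
Qed.

Lemma mderiv_natr (j : 'I_n) k : mderiv j (k%:R : {mpoly F[n]}) = 0.
Proof. by rewrite mderivMn -mpolyC1 mderivC mul0rn. Qed.

End MPolyDeriv.

Section QuadricSurface.
Variable F : fieldType.
Hypothesis three_neq0 : 3%:R != 0 :> F.

Local Notation pt x k := (x 0 (@inord 4 k)).

Lemma inord_eqE (k : nat) (j : 'I_5) :
  (k < 5)%N -> (inord k == j) = (k == j :> nat).
Proof. by move=> lt_k5; rewrite -val_eqE /= inordK. Qed.

Lemma vec5E (a0 a1 a2 a3 a4 : F) k : (k < 5)%N ->
  pt (vec5 a0 a1 a2 a3 a4) k = nth 0 [:: a0; a1; a2; a3; a4] k.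
Proof. by move=> lt_k5; rewrite mxE inordK. Qed.

Definition lgrad : 'rV[F]_5 := vec5 1 1 1 (- 3%:R) (- 3%:R).

Lemma grad_lQ x : grad (lQ F) x = lgrad.
Proof.
apply/rowP => j; rewrite !mxE /lQ /X.
rewrite !(mderivB, mderivD, mderivM, mderiv_natr, mderiv_X) /ev.
rewrite !(mevalB, mevalD, mevalM, mevalMn, meval1, meval0, mevalXU) !inord_eqE //.
by case: j => [[|[|[|[|[|//]]]]] ?] /=; ring.
Qed.

Lemma grad_qQ x : grad (qQ F) x =
  vec5 (2%:R * pt x 0 - pt x 1 - pt x 2 - 3%:R * pt x 3)
       (2%:R * pt x 1 - pt x 0 - pt x 2 - 3%:R * pt x 3)
       (2%:R * pt x 2 - pt x 0 - pt x 1 - 3%:R * pt x 3)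
       (18%:R * pt x 3 - 3%:R * pt x 0 - 3%:R * pt x 1 - 3%:R * pt x 2) 0.
Proof.
apply/rowP => j; rewrite !mxE /qQ /X !expr2.
rewrite !(mderivB, mderivD, mderivM, mderiv_natr, mderiv_X) /ev.
rewrite !(mevalB, mevalD, mevalM, mevalMn, meval1, meval0, mevalXU) !inord_eqE //.
by case: j => [[|[|[|[|[|//]]]]] ?] /=; ring.
Qed.

Lemma ev_lQ x : ev (lQ F) x = pt x 0 + pt x 1 + pt x 2 - 3%:R * pt x 3 - 3%:R * pt x 4.
Proof. by rewrite /ev /lQ /X !(mevalB, mevalD, mevalM, mevalMn, meval1, mevalXU). Qed.

Lemma ev_qQ x : ev (qQ F) x =
  pt x 0 ^+ 2 + pt x 1 ^+ 2 + pt x 2 ^+ 2 + 9%:R * pt x 3 ^+ 2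
  - pt x 0 * pt x 1 - pt x 0 * pt x 2 - 3%:R * (pt x 0 * pt x 3)
  - pt x 1 * pt x 2 - 3%:R * (pt x 1 * pt x 3) - 3%:R * (pt x 2 * pt x 3).
Proof.
by rewrite /ev /qQ /X !expr2 !(mevalB, mevalD, mevalM, mevalMn, meval1, mevalXU).
Qed.

Lemma nine_neq0 : 9%:R != 0 :> F.
Proof. by rewrite (natrM F 3 3) mulf_neq0. Qed.

Lemma lgrad_neq0 j : lgrad 0 j != 0.
Proof.
by rewrite mxE; case: j => [[|[|[|[|[|//]]]]] ?]; rewrite /= ?oppr_eq0 ?oner_eq0.
Qed.

Lemma grad_qQ_addZ x y a :
  grad (qQ F) (x + a *: y) = grad (qQ F) x + a *: grad (qQ F) y.
Proof.
apply/rowP => j; rewrite !grad_qQ !mxE.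
by case: j => [[|[|[|[|[|//]]]]] ?] /=; ring.
Qed.

Lemma ev_lQ_addZ x y a : ev (lQ F) (x + a *: y) = ev (lQ F) x + a * ev (lQ F) y.
Proof. by rewrite !ev_lQ !mxE; ring. Qed.

(* An explicit inverse of x |-> (grad q(x), l(x)): q is nondegenerate on the
   hyperplane l = 0. *)
Lemma coords_of_grad_qQ_lQ x :
  let g k := grad (qQ F) x 0 (inord k) in
  9%:R *: x = vec5 (- 3%:R * g 1 - 3%:R * g 2 - g 3)
                   (- 3%:R * g 0 - 3%:R * g 2 - g 3)
                   (- 3%:R * g 0 - 3%:R * g 1 - g 3)
                   (- (g 0 + g 1 + g 2))
                   (- (g 0 + g 1 + g 2 + g 3) - 3%:R * ev (lQ F) x).
Proof.
rewrite /= grad_qQ ev_lQ; apply/rowP => j; rewrite !mxE !inordK //=.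
by case: j => [[|[|[|[|[|//]]]]] ?] /=; rewrite -[Ordinal _]inord_val /=; ring.
Qed.

Lemma qQ_nonsingular x c : grad (qQ F) x = c *: lgrad -> ev (lQ F) x = 0 -> x = 0.
Proof.
move=> grad_x lx0.
have c0 : c = 0.
  have := congr1 (fun v : 'rV[F]_5 => pt v 4) grad_x.
  rewrite grad_qQ !mxE inordK //= => /esym/eqP.
  by rewrite mulf_eq0 oppr_eq0 (negbTE three_neq0) orbF => /eqP.
have /eqP : 9%:R *: x = 0.
  rewrite coords_of_grad_qQ_lQ /= grad_x c0 scale0r lx0; apply/rowP => j; rewrite !mxE.
  by case: j => [[|[|[|[|[|//]]]]] ?] /=; ring.
by rewrite scaler_eq0 (negbTE nine_neq0) => /eqP.
Qed.

Lemma tangency_point_onQ i : onQ (tangency_point F i).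
Proof.
rewrite /onQ ev_lQ ev_qQ.
case: i => [[|[|[|[|[|//]]]]] ?]; rewrite /tangency_point /= !vec5E //=.
all: split; last by split; ring.
all: apply/negP => /eqP/rowP P0; move: (P0 (inord 3)) (P0 (inord 4)).
all: by rewrite !vec5E // !mxE /= => /eqP + /eqP; rewrite ?oner_eq0.
Qed.

Lemma grad_qQ_tangency_point i :
  exists c, grad (qQ F) (tangency_point F i) = c *: lgrad - 9%:R *: delta_mx 0 i.
Proof.
case: i => [[|[|[|[|[|//]]]]] ?];
  [exists 0 | exists 0 | exists 0 | exists 0 | exists (- 3%:R)].
all: apply/rowP => j; rewrite grad_qQ /tangency_point /= !vec5E // !mxE.
all: by case: j => [[|[|[|[|[|//]]]]] ?] /=; ring.
Qed.

Lemma tangency_point_tangent i : tangent_coord_hyp i (tangency_point F i).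
Proof.
have [c gradP] := grad_qQ_tangency_point i.
have {}gradP : grad (qQ F) (tangency_point F i) =
    c *: grad (lQ F) (tangency_point F i) + (- 9%:R) *: delta_mx 0 i.
  by rewrite gradP grad_lQ scaleNr.
have nine : - 9%:R != 0 :> F by rewrite oppr_eq0 nine_neq0.
have [b bi] := exists_ord_neq i.
split; first exact: tangency_point_onQ.
split; last exact: span_kernel_in_coord_hyperplane gradP nine.
by apply: rank_col_mx_span gradP nine bi _; rewrite grad_lQ lgrad_neq0.
Qed.

Lemma tangency_point_unique i P :
  tangent_coord_hyp i P -> exists c, P = c *: tangency_point F i.
Proof.
move=> [[_ [lP0 _]] [_ kerP]].
have [b bi] := exists_ord_neq i.
have [c [d gradP]] : exists c d, grad (qQ F) P = c *: lgrad + d *: delta_mx 0 i.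
  rewrite -(grad_lQ P); apply: kernel_in_coord_hyperplane_span bi _ kerP.
  by rewrite grad_lQ lgrad_neq0.
have [e gradPi] := grad_qQ_tangency_point i.
exists (- (d / 9%:R)); apply/eqP; rewrite scaleNr -addr_eq0; apply/eqP.
apply: (qQ_nonsingular (c := c + d / 9%:R * e)).
  rewrite grad_qQ_addZ gradP gradPi; apply/rowP => j; rewrite !mxE.
  by field; exact: nine_neq0.
by rewrite ev_lQ_addZ lP0 (tangency_point_onQ i).2.1 mulr0 addr0.
Qed.

End QuadricSurface.

Theorem mainTheorem13 (F : fieldType) (charF0 : [pchar F] =i pred0) :
  forall i : 'I_5,
    tangent_coord_hyp i (tangency_point F i) /\
    (forall P : 'rV[F]_5, tangent_coord_hyp i P ->
       exists c : F, P = c *: tangency_point F i).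
Proof.
have three_neq0 : 3%:R != 0 :> F by rewrite ((pcharf0P F).1 charF0).
move=> i; split; first exact: tangency_point_tangent.
exact: tangency_point_unique.
Qed.
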